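(* Let $(R,\mathfrak{m})$ be a Noetherian local ring and let $\varphi$ be a self-map of finite length of $R$. Then for every $n\geq 1$ the map $\varphi^n$ is of finite length, and the sequence $\{(\log\lambda(\varphi^n))/n\}_{n\geq1}$ converges, and its limit equals $\inf_{n\geq1}(\log\lambda(\varphi^n))/n$.
   Context: All rings are Noetherian, commutative, with identity. A self-map of a ring is a ring endomorphism; $\varphi^n$ denotes the $n$-fold composition. A homomorphism $f:(R,\mathfrak{m})\to(S,\mathfrak{n})$ of Noetherian local rings is of finite length if it is local and $f(\mathfrak{m})S$ is $\mathfrak{n}$-primary; its length is $\lambda(f):=\ell_S(S/f(\mathfrak{m})S)$. A self-map of finite length of $R$ is an endomorphism of $R$ which is a homomorphism of finite length $R\to R$. *)

From HB Require Import structures.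
From mathcomp Require Import all_boot all_algebra.
Set Implicit Arguments. Unset Strict Implicit. Unset Printing Implicit Defensive.
Import GRing.Theory.

Section CommAlg.
Local Open Scope ring_scope.

Definition is_ideal (R : comNzRingType) (I : R -> Prop) : Prop :=
  I 0 /\ (forall x y, I x -> I y -> I (x + y)) /\ (forall r x, I x -> I (r * x)).

Definition subideal (R : comNzRingType) (I J : R -> Prop) : Prop :=
  forall x, I x -> J x.

Definition noetherian (R : comNzRingType) : Prop :=
  forall J : nat -> (R -> Prop),
    (forall n, is_ideal (J n)) ->
    (forall n, subideal (J n) (J n.+1)) ->
    exists N, forall n, (N <= n)%N -> forall x, J n x <-> J N x.

Definition local_ring (R : comNzRingType) (m : R -> Prop) : Prop :=
  is_ideal m /\ ~ m 1 /\ (forall x, ~ m x -> exists y, x * y = 1).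

Definition noetherian_local (R : comNzRingType) (m : R -> Prop) : Prop :=
  noetherian R /\ local_ring m.

(** The ideal f(I)S of S generated by the image of I under f : R -> S
    (intersection of all ideals of S containing f(I)). *)
Definition ext_ideal (R S : comNzRingType) (f : R -> S) (I : R -> Prop) : S -> Prop :=
  fun x => forall J : S -> Prop, is_ideal J -> (forall y, I y -> J (f y)) -> J x.

Definition radical (S : comNzRingType) (q : S -> Prop) : S -> Prop :=
  fun x => exists k : nat, q (x ^+ k).

Definition primary (S : comNzRingType) (q : S -> Prop) : Prop :=
  is_ideal q /\ ~ q 1 /\
  (forall x y, q (x * y) -> ~ q x -> exists k : nat, q (y ^+ k)).

Definition primary_to (S : comNzRingType) (n q : S -> Prop) : Prop :=
  primary q /\ (forall x, radical q x <-> n x).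

Definition local_hom (R S : comNzRingType) (m : R -> Prop) (n : S -> Prop)
    (f : R -> S) : Prop :=
  forall x, m x -> n (f x).

(** A ring homomorphism f is of finite length: local, and f(m)S is n-primary.
    (Being a ring homomorphism is imposed separately, e.g. by f being an
    rmorphism, or an iterate of one.) *)
Definition finite_length_hom (R S : comNzRingType) (m : R -> Prop) (n : S -> Prop)
    (f : R -> S) : Prop :=
  local_hom m n f /\ primary_to n (ext_ideal f m).

(** Submodules of S/I are the ideals of S
    containing I, so a strict chain of submodules of length k is a chain
    J_0 < J_1 < ... < J_k of ideals of S containing I (strict inclusions). *)
Definition quot_chain (S : comNzRingType) (I : S -> Prop) (k : nat)
    (J : nat -> (S -> Prop)) : Prop :=
  (forall i, (i <= k)%N -> is_ideal (J i) /\ subideal I (J i)) /\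
  (forall i, (i < k)%N -> subideal (J i) (J i.+1) /\ ~ subideal (J i.+1) (J i)).

Definition quot_length (S : comNzRingType) (I : S -> Prop) (l : nat) : Prop :=
  (exists J, quot_chain I l J) /\
  (forall k J, quot_chain I k J -> (k <= l)%N).

End CommAlg.

From Stdlib Require Import Reals.

Definition is_inf (E : R -> Prop) (l : R) : Prop :=
  (forall x, E x -> Rle l x) /\
  (forall b, (forall x, E x -> Rle b x) -> Rle b l).

(* The theorem follows: n |-> lambda(phi^n) is a submultiplicative sequence of
   positive integers, to whose logarithm Fekete's lemma applies. *)

From HB Require Import structures.
From mathcomp Require Import all_boot all_algebra zify.
From Stdlib Require Import Reals Lra Lia Classical ClassicalEpsilon
  FunctionalExtensionality PropExtensionality.

Set Implicit Arguments. Unset Strict Implicit. Unset Printing Implicit Defensive.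
Import GRing.Theory.

Section Fekete.
Local Open Scope R_scope.

Lemma is_inf_exists (E : R -> Prop) (b : R) :
  (exists x, E x) -> (forall x, E x -> b <= x) -> exists l, is_inf E l.
Proof.
move=> [x0 hx0] hb.
have hbnd : bound (fun y => E (- y)).
  by exists (- b) => y hy; have := hb _ hy; lra.
have hne : exists y, E (- y) by exists (- x0); rewrite Ropp_involutive.
have [s [hs1 hs2]] := completeness _ hbnd hne.
exists (- s); split.
- by move=> x hx; have := hs1 (- x); rewrite Ropp_involutive => /(_ hx); lra.
- move=> c hc; suff : s <= - c by lra.
  by apply: hs2 => y hy; have := hc _ hy; lra.
Qed.

Variable u : nat -> R.
Hypothesis u_ge0 : forall n, (0 < n)%nat -> 0 <= u n.
Hypothesis u_subadd :
  forall a b, (0 < a)%nat -> (0 < b)%nat -> u (a + b)%nat <= u a + u b.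

Lemma subadd_iter q p r : (0 < p)%nat -> (0 < r)%nat ->
  u (q * p + r)%nat <= INR q * u p + u r.
Proof.
move=> hp hr; elim: q => [|q IH]; first by rewrite mul0n add0n /=; lra.
rewrite mulSn -addnA S_INR.
have hqr : (0 < q * p + r)%nat by lia.
have := u_subadd hp hqr; lra.
Qed.

Lemma subadd_linear r : (0 < r)%nat -> u r <= INR r * u 1.
Proof.
move=> hr; have := subadd_iter (r - 1) (ltn0Sn 0) (ltn0Sn 0).
rewrite muln1 subnK // -(Rmult_1_l (u 1)) => h.
rewrite (_ : INR r = INR (r - 1) + 1); first lra.
by rewrite -S_INR -addn1 subnK.
Qed.

(* Euclidean division of n by p gives u(n)/n <= u(p)/p + p u(1)/n. *)
Lemma subadd_ratio_bound n p : (0 < n)%nat -> (0 < p)%nat ->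
  u n / INR n <= u p / INR p + INR p * u 1 / INR n.
Proof.
move=> hn hp.
set q := ((n - 1) %/ p)%nat; set r := ((n - 1) %% p + 1)%nat.
have hr : (0 < r)%nat by rewrite /r addn1.
have en : n = (q * p + r)%nat by rewrite /r /q addnA -divn_eq subnK.
have hrp : (r <= p)%nat by rewrite /r addn1 ltn_pmod.
have hqp : INR q * INR p <= INR n.
  by rewrite -mult_INR multE; apply: le_INR; apply/leP; rewrite en leq_addr.
have hun : u n <= INR q * u p + INR r * u 1.
  by rewrite {1}en; have := subadd_iter q hp hr; have := subadd_linear hr; lra.
have hP : 1 <= INR p by apply: (le_INR 1); apply/leP.
have hN : 1 <= INR n by apply: (le_INR 1); apply/leP.
have hR : INR r <= INR p by apply: le_INR; apply/leP.
have hup := u_ge0 hp; have hu1 := u_ge0 (ltn0Sn 0).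
set W := u p / INR p.
have hW0 : 0 <= W by apply: Rmult_le_pos => //; apply: Rlt_le; apply: Rinv_0_lt_compat; lra.
have hupW : u p = W * INR p by rewrite /W; field; lra.
have key : u n <= INR n * W + INR p * u 1.
  have := pos_INR q; rewrite hupW in hun; nra.
apply: (Rmult_le_reg_r (INR n)); first lra.
rewrite Rmult_plus_distr_r.
have -> : u n / INR n * INR n = u n by field; lra.
have -> : INR p * u 1 / INR n * INR n = INR p * u 1 by field; lra.
nra.
Qed.

Definition ratio_set (x : R) : Prop := exists n, (0 < n)%nat /\ x = u n / INR n.

Lemma ratio_ge0 n : (0 < n)%nat -> 0 <= u n / INR n.
Proof.
move=> hn; apply: Rmult_le_pos; first exact: u_ge0.
by apply: Rlt_le; apply: Rinv_0_lt_compat; apply: lt_0_INR; apply/ltP.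
Qed.

Theorem fekete : exists l,
  Un_cv (fun k => u k.+1 / INR k.+1) l /\ is_inf ratio_set l.
Proof.
have [l [hlow hgreat]] : exists l, is_inf ratio_set l.
  apply: (is_inf_exists (b := 0)); first by exists (u 1 / INR 1), 1%nat.
  by move=> x [n [hn ->]]; exact: ratio_ge0.
exists l; split; last by split.
move=> eps heps.
have [p [hp hup]] : exists p, (0 < p)%nat /\ u p / INR p < l + eps / 2.
  apply: NNPP => hno; suff : l + eps / 2 <= l by lra.
  apply: hgreat => x [n [hn ->]]; apply: Rnot_lt_le => hlt.
  by apply: hno; exists n.
have [N hN] := INR_archimed (eps / 2) (INR p * u 1) ltac:(lra).
exists N => k hk; rewrite /R_dist.
have hk1 : (0 < k.+1)%nat by [].
have hlk : l <= u k.+1 / INR k.+1 by apply: hlow; exists k.+1.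
have hbound := subadd_ratio_bound hk1 hp.
have hNk : INR N <= INR k.+1 by apply: le_INR; lia.
have hk0 : 0 < INR k.+1 by apply: lt_0_INR; lia.
have hsmall : INR p * u 1 / INR k.+1 < eps / 2.
  apply: (Rmult_lt_reg_r (INR k.+1)) => //.
  have -> : INR p * u 1 / INR k.+1 * INR k.+1 = INR p * u 1 by field; lra.
  nra.
rewrite Rabs_right; lra.
Qed.

End Fekete.

Lemma ln_le_ln (x y : R) : Rlt 0 x -> Rle x y -> Rle (ln x) (ln y).
Proof.
move=> hx [hxy|->]; [left; exact: ln_increasing | exact: Rle_refl].
Qed.

Corollary fekete_log (lam : nat -> nat) :
  (forall n, (0 < n)%nat -> (0 < lam n)%nat) ->
  (forall a b, (0 < a)%nat -> (0 < b)%nat -> (lam (a + b) <= lam a * lam b)%nat) ->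
  exists l,
    Un_cv (fun k => Rdiv (ln (INR (lam k.+1))) (INR k.+1)) l /\
    is_inf (ratio_set (fun n => ln (INR (lam n)))) l.
Proof.
move=> hpos hsub; have hge1 n : (0 < n)%nat -> Rle 1 (INR (lam n)).
  by move=> hn; apply: (le_INR 1); apply/leP; exact: hpos.
apply: fekete.
- by move=> n hn; rewrite -ln_1; apply: ln_le_ln; [lra | exact: hge1].
- move=> a b ha hb; have h1 := hge1 _ ha; have h2 := hge1 _ hb.
  rewrite -ln_mult; try lra.
  apply: ln_le_ln; first by have := hge1 (a + b)%nat ltac:(lia); lra.
  by rewrite -mult_INR multE; apply: le_INR; apply/leP; exact: hsub.
Qed.

Section Ideals.
Local Open Scope ring_scope.
Variable A : comNzRingType.
Implicit Types (I J K N : A -> Prop) (a x y z : A).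

Lemma ideal0 I : is_ideal I -> I 0.
Proof. by case. Qed.

Lemma idealD I x y : is_ideal I -> I x -> I y -> I (x + y).
Proof. by case=> _ [hD _]; apply: hD. Qed.

Lemma idealMl I a x : is_ideal I -> I x -> I (a * x).
Proof. by case=> _ [_ hM]; apply: hM. Qed.

Lemma idealMr I a x : is_ideal I -> I x -> I (x * a).
Proof. by rewrite mulrC; apply: idealMl. Qed.

Lemma idealB I x y : is_ideal I -> I x -> I y -> I (x - y).
Proof. by move=> hI hx hy; rewrite -mulN1r; apply: idealD => //; apply: idealMl. Qed.

Lemma ideal_unit I x : is_ideal I -> I 1 -> I x.
Proof. by move=> hI h1; rewrite -(mulr1 x); apply: idealMl. Qed.

Lemma not_subideal I J : ~ subideal I J -> exists x, I x /\ ~ J x.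
Proof.
by move=> h; apply: NNPP => hn; apply: h => x hx; apply: NNPP => hJ; apply: hn; exists x.
Qed.

Definition whole : A -> Prop := fun _ => True.
Definition meet I J : A -> Prop := fun x => I x /\ J x.
Definition sum I J : A -> Prop := fun z => exists a b, I a /\ J b /\ z = a + b.
Definition multiples N x : A -> Prop := fun z => exists a, N a /\ z = a * x.
Definition colon I x : A -> Prop := fun a => I (a * x).

Lemma whole_ideal : is_ideal whole.
Proof. by []. Qed.

Lemma meet_ideal I J : is_ideal I -> is_ideal J -> is_ideal (meet I J).
Proof.
move=> hI hJ; split; first by split; apply: ideal0.
split; first by move=> x y [? ?] [? ?]; split; apply: idealD.
by move=> a x [? ?]; split; apply: idealMl.
Qed.

Lemma sum_ideal I J : is_ideal I -> is_ideal J -> is_ideal (sum I J).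
Proof.
move=> hI hJ; split; first by exists 0, 0; rewrite addr0; do !split; apply: ideal0.
split=> [_ _ [a [b [ha [hb ->]]]] [c [d [hc [hd ->]]]]|r _ [a [b [ha [hb ->]]]]].
  by exists (a + c), (b + d); rewrite addrACA; do !split; apply: idealD.
by exists (r * a), (r * b); rewrite mulrDr; do !split; apply: idealMl.
Qed.

Lemma multiples_ideal N x : is_ideal N -> is_ideal (multiples N x).
Proof.
move=> hN; split; first by exists 0; rewrite mul0r; split=> //; apply: ideal0.
split=> [_ _ [a [ha ->]] [b [hb ->]]|r _ [a [ha ->]]].
  by exists (a + b); rewrite mulrDl; split=> //; apply: idealD.
by exists (r * a); rewrite mulrA; split=> //; apply: idealMl.
Qed.

Lemma colon_ideal I x : is_ideal I -> is_ideal (colon I x).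
Proof.
move=> hI; split; first by rewrite /colon mul0r; apply: ideal0.
split; first by move=> a b ha hb; rewrite /colon mulrDl; apply: idealD.
by move=> r a ha; rewrite /colon -mulrA; apply: idealMl.
Qed.

Lemma sum_subl I J : is_ideal J -> subideal I (sum I J).
Proof. by move=> hJ x hx; exists x, 0; rewrite addr0; do !split=> //; apply: ideal0. Qed.

Lemma sum_subr I J : is_ideal I -> subideal J (sum I J).
Proof. by move=> hI x hx; exists 0, x; rewrite add0r; do !split=> //; apply: ideal0. Qed.

Lemma sum_min I J K : is_ideal K -> subideal I K -> subideal J K -> subideal (sum I J) K.
Proof. by move=> hK hIK hJK _ [a [b [ha [hb ->]]]]; apply: idealD; auto. Qed.

(* In a local ring (A, m): if a is in m and y - a y lies in I, then y lies in I,
   since 1 - a is a unit. *)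
Lemma local_cancel m I a y :
  local_ring m -> is_ideal I -> m a -> I (y - a * y) -> I y.
Proof.
move=> [hm [hm1 hunit]] hI ha hy.
have [v hv] : exists v, (1 - a) * v = 1.
  apply: hunit => h; apply: hm1; rewrite -(subrK a 1); exact: idealD.
by rewrite -[y]mul1r -hv mulrC mulrA mulrBr mulr1 (mulrC y); apply: idealMr.
Qed.

End Ideals.

Arguments whole {A}.
Arguments whole_ideal {A}.

Section Extension.
Local Open Scope ring_scope.
Variables A B : comNzRingType.
Implicit Types (f : A -> B) (I J : A -> Prop).

Lemma ext_ideal_ideal f I : is_ideal (ext_ideal f I).
Proof.
split; first by move=> J hJ _; apply: ideal0.
split; first by move=> x y hx hy J hJ hf; apply: idealD => //; [apply: hx | apply: hy].
by move=> r x hx J hJ hf; apply: idealMl => //; apply: hx.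
Qed.

Lemma ext_ideal_gen f I y : I y -> ext_ideal f I (f y).
Proof. by move=> hy J hJ hf; apply: hf. Qed.

Lemma ext_ideal_min f I (J : B -> Prop) :
  is_ideal J -> (forall y, I y -> J (f y)) -> subideal (ext_ideal f I) J.
Proof. by move=> hJ hf x hx; apply: hx. Qed.

Lemma ext_ideal_mono f I J : subideal I J -> subideal (ext_ideal f I) (ext_ideal f J).
Proof.
move=> hIJ; apply: ext_ideal_min; first exact: ext_ideal_ideal.
by move=> y hy; apply: ext_ideal_gen; apply: hIJ.
Qed.

(* Ring homomorphisms, as a predicate on functions so that it applies to
   iterates and composites of morphisms. *)
Definition ring_map f : Prop :=
  [/\ forall x y, f (x + y) = f x + f y, forall x y, f (x * y) = f x * f y & f 1 = 1].

Lemma ring_map0 f : ring_map f -> f 0 = 0.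
Proof. by case=> hD _ _; apply: (addrI (f 0)); rewrite -hD !addr0. Qed.

Lemma ring_mapX f x k : ring_map f -> f (x ^+ k) = f x ^+ k.
Proof. by case=> _ hM h1; elim: k => [|k IH]; rewrite ?expr0 // !exprS hM IH. Qed.

Lemma preimage_ideal f (J : B -> Prop) :
  ring_map f -> is_ideal J -> is_ideal (fun x => J (f x)).
Proof.
move=> hf hJ; have [hD hM _] := hf; split; first by rewrite ring_map0 //; apply: ideal0.
split; first by move=> x y hx hy; rewrite hD; apply: idealD.
by move=> r x hx; rewrite hM; apply: idealMl.
Qed.

Lemma ext_ideal_whole f : ring_map f -> subideal whole (ext_ideal f whole).
Proof.
case=> _ _ h1 x _; apply: (ideal_unit _ (ext_ideal_ideal f whole)).
by rewrite -h1; exact: ext_ideal_gen.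
Qed.

End Extension.

Lemma rmorph_ring_map (A B : comNzRingType) (f : {rmorphism A -> B}) : ring_map f.
Proof. by split; [exact: rmorphD | exact: rmorphM | exact: rmorph1]. Qed.

Lemma ring_map_comp (A B C : comNzRingType) (f : A -> B) (g : B -> C) :
  ring_map f -> ring_map g -> ring_map (g \o f).
Proof. by case=> fD fM f1 [gD gM g1]; split=> [x y|x y|] /=; rewrite ?fD ?fM ?f1. Qed.

Lemma ring_map_iter (A : comNzRingType) (f : A -> A) n :
  ring_map f -> ring_map (iter n f).
Proof.
by move=> hf; elim: n => [|n IH]; [split | exact: ring_map_comp IH hf].
Qed.

Lemma ext_ideal_comp (A B C : comNzRingType) (f : A -> B) (g : B -> C) (I : A -> Prop) :
  ring_map g -> subideal (ext_ideal g (ext_ideal f I)) (ext_ideal (g \o f) I).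
Proof.
move=> hg; apply: ext_ideal_min; first exact: ext_ideal_ideal.
move=> y; apply: (ext_ideal_min (J := fun z => ext_ideal (g \o f) I (g z))).
  by apply: preimage_ideal => //; exact: ext_ideal_ideal.
by move=> x hx; exact: (ext_ideal_gen (f := g \o f) hx).
Qed.

Section Chains.
Local Open Scope ring_scope.
Variable A : comNzRingType.
Implicit Types (I J K X : A -> Prop) (C : nat -> A -> Prop).

(* chain_in I J k C: C 0 < C 1 < ... < C k is a strict chain of ideals lying
   between I and J, i.e. a chain of submodules of length k of J/I. *)
Definition chain_in I J k C : Prop :=
  quot_chain I k C /\ (forall i, (i <= k)%nat -> subideal (C i) J).

Definition len_le I J n : Prop := forall k C, chain_in I J k C -> (k <= n)%nat.

Lemma chain_in_whole I k C : quot_chain I k C -> chain_in I whole k C.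
Proof. by []. Qed.

Lemma chain_in_const I J X :
  is_ideal X -> subideal I X -> subideal X J -> chain_in I J 0 (fun _ => X).
Proof. by []. Qed.

Lemma chain_in_pair I J : is_ideal I -> is_ideal J -> subideal I J -> ~ subideal J I ->
  chain_in I J 1 (fun i => if i is 0%nat then I else J).
Proof.
move=> hI hJ hIJ hJI; split; first split.
- by case=> [|[|]] //= _; split.
- by case=> [|[|]] //= _; split.
- by case=> [|[|]] //= _ x.
Qed.

Lemma chain_in_cons I J X k C :
  chain_in I J k C -> is_ideal X -> subideal I X -> subideal X J ->
  subideal X (C 0%nat) -> ~ subideal (C 0%nat) X ->
  chain_in I J k.+1 (fun i => if i is i'.+1 then C i' else X).
Proof.
move=> [[h1 h2] h3] hX hIX hXJ hXC hCX; split; first split.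
- by case=> [|i] /= hi //; apply: h1.
- by case=> [|i] /= hi //; apply: h2.
- by case=> [|i] /= hi //; apply: h3.
Qed.

Lemma chain_in_rcons I J X k C :
  chain_in I J k C -> is_ideal X -> subideal I X -> subideal X J ->
  subideal (C k) X -> ~ subideal X (C k) ->
  chain_in I J k.+1 (fun i => if (i <= k)%nat then C i else X).
Proof.
move=> [[h1 h2] h3] hX hIX hXJ hCX hXC; split; first split.
- by move=> i hi; case: ifP => // hik; apply: h1.
- move=> i hi; case: (ltnP i k) => hik; first by rewrite (ltnW hik); apply: h2.
  have -> : i = k by lia.
  by rewrite leqnn.
- by move=> i hi; case: ifP => // hik; apply: h3.
Qed.

Lemma chain_in_behead I J k C :
  chain_in I J k.+1 C -> chain_in I J k (fun i => C i.+1).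
Proof.
move=> [[h1 h2] h3]; split; first split.
- by move=> i hi; apply: h1.
- by move=> i hi; apply: h2.
- by move=> i hi; apply: h3.
Qed.

Lemma chain_in_belast I J k C : chain_in I J k.+1 C -> chain_in I J k C.
Proof.
move=> [[h1 h2] h3]; split; first split.
- by move=> i hi; apply: h1; apply: leqW.
- by move=> i hi; apply: h2; apply: ltnW.
- by move=> i hi; apply: h3; apply: leqW.
Qed.

Lemma chain_in_lower I K J k C : subideal I K -> chain_in K J k C -> chain_in I J k C.
Proof.
move=> hIK [[h1 h2] h3]; split=> //; split=> // i hi.
by have [hC hKC] := h1 i hi; split=> // x hx; apply: hKC; apply: hIK.
Qed.

Lemma len_le_mono I I' J J' n :
  subideal I' I -> subideal J J' -> len_le I' J' n -> len_le I J n.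
Proof.
move=> hI hJ hl k C hC; apply: (hl k C); have [hq h3] := chain_in_lower hI hC.
by split=> // i hi x hx; apply: hJ; apply: (h3 i hi).
Qed.

Lemma len_le_trivial I J : subideal J I -> len_le I J 0.
Proof.
move=> hJI [|k] C [[h1 h2] h3] //; exfalso.
apply: (h2 0%nat (ltn0Sn _)).2 => x hx.
by apply: (h1 0%nat (leq0n _)).2; apply: hJI; exact: (h3 1%nat (ltn0Sn _)).
Qed.

Lemma len_le_quotient I J K n :
  is_ideal I -> subideal I K -> ~ subideal K I -> subideal K J ->
  len_le I J n.+1 -> len_le K J n.
Proof.
move=> hI hIK hKI hKJ hl k C hC; suff : (k.+1 <= n.+1)%nat by [].
have hC0 : subideal K (C 0%nat) by have [[h1 _] _] := hC; exact: (h1 0%nat (leq0n _)).2.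
apply: (hl _ _ (chain_in_cons (chain_in_lower hIK hC) hI (fun x hx => hx) _ _ _)).
- by move=> x hx; apply: hKJ; apply: hIK.
- by move=> x hx; apply: hC0; apply: hIK.
- by move=> hs; apply: hKI => y hy; apply: hs; exact: hC0.
Qed.

End Chains.

Section Additivity.
Local Open Scope ring_scope.
Variable A : comNzRingType.
Implicit Types (I J K X Y : A -> Prop) (C : nat -> A -> Prop).

Lemma ideal_ext I J : subideal I J -> subideal J I -> I = J.
Proof.
move=> hIJ hJI; apply: functional_extensionality => x.
by apply: propositional_extensionality; split; [apply: hIJ | apply: hJI].
Qed.

Lemma modular_law X Y K : is_ideal X -> is_ideal Y -> is_ideal K -> subideal X Y ->
  subideal (meet Y K) (meet X K) -> subideal (sum Y K) (sum X K) -> subideal Y X.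
Proof.
move=> hX hY hK hXY hmeet hsum y hy.
have [a [b [ha [hb ey]]]] := hsum _ (sum_subl hK hy); subst y.
have hbY : Y b.
  have -> : b = (a + b) - a by rewrite addrAC subrr add0r.
  by apply: (idealB hY) => //; apply: hXY.
by apply: (idealD hX) => //; have [] := hmeet b (conj hbY hb).
Qed.

Lemma chain_in_grow I J p C Y :
  chain_in I J p C -> subideal (C p) Y -> is_ideal Y -> subideal I Y -> subideal Y J ->
  exists p' C', [/\ chain_in I J p' C', C' p' = Y, (p <= p')%nat
                   & ~ subideal Y (C p) -> (p < p')%nat].
Proof.
move=> hC hCY hY hIY hYJ; case: (classic (subideal Y (C p))) => hYC.
  by exists p, C; split=> //; apply: ideal_ext.
exists p.+1, (fun i => if (i <= p)%nat then C i else Y).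
by split=> //; [exact: chain_in_rcons | rewrite ltnn].
Qed.

(* A chain between I and J induces, by intersecting and adding K, chains between
   I and K and between K and J, at least one of which grows at each step. *)
Lemma chain_in_split I K J k C :
  is_ideal K -> is_ideal J -> subideal I K -> subideal K J -> chain_in I J k C ->
  exists p q C1 C2, [/\ chain_in I K p C1, chain_in K J q C2,
    C1 p = meet (C k) K, C2 q = sum (C k) K & (k <= p + q)%nat].
Proof.
move=> hK hJ hIK hKJ; elim: k C => [|k IH] C hC.
  have [[h1 _] h3] := hC; have [hC0 hIC0] := h1 0%nat (leqnn _).
  exists 0%nat, 0%nat, (fun _ => meet (C 0%nat) K), (fun _ => sum (C 0%nat) K).
  split=> //; apply: chain_in_const.
  - exact: meet_ideal.
  - by move=> x hx; split; [apply: hIC0 | apply: hIK].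
  - by move=> x [].
  - exact: sum_ideal.
  - exact: sum_subr.
  - by apply: sum_min => //; exact: h3.
have [p [q [C1 [C2 [hC1 hC2 e1 e2 hk]]]]] := IH C (chain_in_belast hC).
have [[h1 h2] h3] := hC.
have [hsub hstr] := h2 k (leqnn _).
have [hCk hICk] := h1 k (leqnSn k); have [hCk1 hICk1] := h1 k.+1 (leqnn _).
have [p' [C1' [hC1' e1' hp hp']]] : exists p' C1',
    [/\ chain_in I K p' C1', C1' p' = meet (C k.+1) K, (p <= p')%nat
      & ~ subideal (meet (C k.+1) K) (C1 p) -> (p < p')%nat].
  apply: chain_in_grow => //.
  - by rewrite e1 => x [hx hxK]; split=> //; apply: hsub.
  - exact: meet_ideal.
  - by move=> x hx; split; [apply: hICk1 | apply: hIK].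
  - by move=> x [].
have [q' [C2' [hC2' e2' hq hq']]] : exists q' C2',
    [/\ chain_in K J q' C2', C2' q' = sum (C k.+1) K, (q <= q')%nat
      & ~ subideal (sum (C k.+1) K) (C2 q) -> (q < q')%nat].
  apply: chain_in_grow => //.
  - rewrite e2; apply: sum_min; [exact: sum_ideal | | exact: sum_subr].
    by move=> x /hsub; exact: sum_subl.
  - exact: sum_ideal.
  - exact: sum_subr.
  - by apply: sum_min => //; exact: h3.
exists p', q', C1', C2'; split=> //.
(* if neither chain grew, C k < C k.+1 would have equal meets and sums with K *)
case: (classic (subideal (meet (C k.+1) K) (C1 p))) => hA; last by have := hp' hA; lia.
case: (classic (subideal (sum (C k.+1) K) (C2 q))) => hB; last by have := hq' hB; lia.
by exfalso; apply: hstr; apply: (modular_law (K := K)); rewrite -?e1 -?e2.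
Qed.

Lemma len_le_add I K J a b :
  is_ideal K -> is_ideal J -> subideal I K -> subideal K J ->
  len_le I K a -> len_le K J b -> len_le I J (a + b).
Proof.
move=> hK hJ hIK hKJ ha hb k C hC.
have [p [q [C1 [C2 [hC1 hC2 _ _ hk]]]]] := chain_in_split hK hJ hIK hKJ hC.
by have := ha _ _ hC1; have := hb _ _ hC2; lia.
Qed.

End Additivity.

Section CyclicQuotients.
Local Open Scope ring_scope.
Variable A : comNzRingType.
Implicit Types (I J K N : A -> Prop) (C : nat -> A -> Prop).

(* If J <= K + A x and N x <= K, then J/K is a quotient of A/N (via a |-> a x),
   so l(J/K) <= l(A/N).  Chains are pulled back by colon ideals. *)
Lemma len_le_cyclic K N J x n :
  is_ideal K -> is_ideal N -> subideal N (colon K x) ->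
  subideal J (sum K (multiples whole x)) -> len_le N whole n -> len_le K J n.
Proof.
move=> hK hN hNK hJ hl k C [[h1 h2] h3]; apply: (hl k (fun i => colon (C i) x)).
split=> //; split=> [i hi|i hi].
  have [hCi hKC] := h1 i hi; split; first exact: colon_ideal.
  by move=> a ha; apply: hKC; apply: hNK.
have [hs hns] := h2 i hi; split=> [a|hcol]; first exact: hs.
apply: hns => y hy.
have [c [_ [hc [[a [_ ->]] ey]]]] := hJ _ (h3 i.+1 hi _ hy).
have hCi := (h1 i (ltnW hi)).1; have hCi1 := (h1 i.+1 hi).1.
have hcC : C i c by apply: (h1 i (ltnW hi)).2.
have hax : C i.+1 (a * x).
  have -> : a * x = y - c by rewrite ey addrAC subrr add0r.
  by apply: (idealB hCi1) => //; apply: hs.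
by rewrite ey; apply: (idealD hCi) => //; exact: hcol.
Qed.

Lemma len_le_residue (m : A -> Prop) : local_ring m -> len_le m whole 1.
Proof.
move=> [hm [hm1 hunit]] [|[|k]] C [[h1 h2] h3] //; exfalso.
have [y [hy1 hy0]] := not_subideal (h2 0%nat isT).2.
have hym : ~ m y by move=> h; apply: hy0; apply: (h1 0%nat isT).2.
have [v hv] := hunit _ hym; have hC1 := (h1 1%nat isT).1.
apply: (h2 1%nat isT).2 => x _; apply: (ideal_unit _ hC1).
by rewrite -hv; apply: idealMr.
Qed.

End CyclicQuotients.

Section Noetherian.
Local Open Scope ring_scope.
Variable A : comNzRingType.
Hypothesis hnoeth : noetherian A.
Implicit Types (I q : A -> Prop).

(* Every nonempty family of ideals has a maximal element: otherwise the axiom of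
   choice produces a strictly ascending chain. *)
Lemma noetherian_maximal (F : (A -> Prop) -> Prop) :
  (forall X, F X -> is_ideal X) -> (exists X, F X) ->
  exists X, F X /\ forall Y, F Y -> subideal X Y -> subideal Y X.
Proof.
move=> hFI [X0 hX0]; apply: NNPP => hno.
have hstep X : exists Y, F X -> F Y /\ subideal X Y /\ ~ subideal Y X.
  case: (classic (F X)) => hX; last by exists X.
  apply: NNPP => hn; apply: hno; exists X; split=> // Y hY hXY.
  by apply: NNPP => hYX; apply: hn; exists Y.
have [g hg] := choice _ hstep.
pose J n := iter n g X0.
have hJF n : F (J n) by elim: n => [|n IH] //=; exact: (hg _ IH).1.
have [N hN] := hnoeth (fun n => hFI _ (hJF n)) (fun n => (hg _ (hJF n)).2.1).
have [_ [_ hstrict]] := hg _ (hJF N).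
by apply: hstrict => x hx; exact: (hN N.+1 (leqnSn N) x).1.
Qed.

(* A proper ideal I has an associated prime: some z outside I for which the
   colon ideal (I : z) is prime (take (I : z) maximal). *)
Lemma associated_prime I : is_ideal I -> ~ I 1 ->
  exists z, ~ I z /\ forall a b, colon I z (a * b) -> ~ colon I z a -> colon I z b.
Proof.
move=> hI hI1.
have [P [[z [hz ->]] hmax]] :=
  noetherian_maximal (F := fun P => exists z, ~ I z /\ P = colon I z)
    (fun _ '(ex_intro z (conj _ e)) => eq_ind_r _ (colon_ideal z hI) e)
    (ex_intro _ _ (ex_intro _ 1 (conj hI1 erefl))).
exists z; split=> // a b hab ha.
have hsub : subideal (colon I z) (colon I (a * z)).
  by move=> c hc; rewrite /colon mulrCA; apply: idealMl.
apply: (hmax _ (ex_intro _ (a * z) (conj ha erefl)) hsub).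
by rewrite /colon mulrCA mulrA.
Qed.

(* A maximal counterexample I >= q has an associated prime (I : z), which
   contains m; then I < I + A z and l((I + A z)/I) <= l(A/m) <= 1. *)
Lemma len_le_of_radical m q : local_ring m -> is_ideal q ->
  (forall x, m x -> exists k : nat, q (x ^+ k)) -> exists L, len_le q whole L.
Proof.
move=> hm hq hrad; apply: NNPP => hno.
have [I [[hI hqI hIno] hImax]] :=
  noetherian_maximal
    (F := fun X => [/\ is_ideal X, subideal q X & ~ exists L, len_le X whole L])
     (fun X h => let: And3 h _ _ := h in h) (ex_intro _ q (And3 hq (fun x h => h) hno)).
have hI1 : ~ I 1.
  by move=> h; apply: hIno; exists 0%nat; apply: len_le_trivial => x _; apply: ideal_unit.
have [z [hz hprime]] := associated_prime hI hI1.
have hpow x k : colon I z (x ^+ k) -> colon I z x.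
  elim: k => [|k IH]; first by rewrite /colon expr0 mul1r.
  by rewrite exprS => h; case: (classic (colon I z x)) => // hx; exact: IH (hprime _ _ h hx).
have hmz : subideal m (colon I z).
  move=> a ha; have [k hk] := hrad _ ha; apply: (hpow a k).
  by rewrite /colon; apply: idealMr => //; exact: hqI.
set I' := sum I (multiples whole z).
have hI' : is_ideal I' by apply: sum_ideal => //; exact: multiples_ideal.
have hII' : subideal I I' by apply: sum_subl; exact: multiples_ideal.
have hI'I : ~ subideal I' I.
  by move=> h; apply: hz; apply: h; apply: sum_subr => //; exists 1; rewrite mul1r.
have [L hL] : exists L, len_le I' whole L.
  apply: NNPP => hn; apply: hI'I; apply: hImax => //; split=> //.
  by move=> x hx; apply: hII'; apply: hqI.
apply: hIno; exists (1 + L)%nat.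
apply: (len_le_add hI' whole_ideal hII') => //.
apply: (len_le_cyclic (N := m) (x := z)) => //; first by case: hm.
exact: len_le_residue.
Qed.

End Noetherian.

Lemma bounded_max (P : nat -> Prop) n :
  (exists k, P k) -> (forall k, P k -> (k <= n)%nat) ->
  exists k, P k /\ forall j, P j -> (j <= k)%nat.
Proof.
elim: n => [|n IH] hex hb.
  by have [k hk] := hex; exists k; split=> // j hj; have := hb _ hj; have := hb _ hk; lia.
case: (classic (P n.+1)) => hn; first by exists n.+1.
apply: IH => // k hk; have := hb _ hk; rewrite leq_eqVlt => /orP [/eqP ek|] //.
by rewrite ek in hk.
Qed.

Section Covers.
Local Open Scope ring_scope.
Variable A : comNzRingType.
Implicit Types (I J K C : A -> Prop).

Definition covers I C : Prop :=
  [/\ is_ideal C, subideal I C, ~ subideal C I &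
      forall K, is_ideal K -> subideal I K -> subideal K C -> ~ subideal K I ->
        subideal C K].

(* A module J/I of finite nonzero length has a simple submodule C/I: the second
   term of a chain of maximal length covers I. *)
Lemma exists_cover I J n :
  is_ideal I -> is_ideal J -> subideal I J -> ~ subideal J I -> len_le I J n ->
  exists C, covers I C /\ subideal C J.
Proof.
move=> hI hJ hIJ hJI hl.
have hpair := chain_in_pair hI hJ hIJ hJI.
have [k [[D hD] hmax]] := bounded_max (P := fun k => exists D, chain_in I J k D)
  (ex_intro _ 1%nat (ex_intro _ _ hpair)) (fun k '(ex_intro D hD) => hl k D hD).
have [k' ek] : exists k', k = k'.+1 by exists k.-1; have := hmax _ (ex_intro _ _ hpair); lia.
subst k; have [[h1 h2] h3] := hD.
have [hD1 hID1] := h1 1%nat isT; have [hD01 hD10] := h2 0%nat isT.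
have hID0 := (h1 0%nat isT).2.
exists (D 1%nat); split; last exact: h3.
split=> //; first by move=> h; apply: hD10 => x hx; apply: hID0; apply: h.
move=> K hK hIK hKD hKI; apply: NNPP => hDK.
(* Otherwise I < K < D 1 < ... < D k'.+1 would be a longer chain. *)
have hlong : chain_in I J k'.+2
  (fun i => if i is i'.+1 then (if i' is i''.+1 then D i''.+1 else K) else I).
  apply: (chain_in_cons (X := I) (C := fun i => if i is i''.+1 then D i''.+1 else K)) => //.
  apply: (chain_in_cons (chain_in_behead hD)) => //.
  by move=> x hx; apply: (h3 1%nat isT); apply: hKD.
by have := hmax _ (ex_intro _ _ hlong); rewrite ltnn.
Qed.

Lemma cover_cyclic m I C y : local_ring m -> is_ideal I -> covers I C -> C y -> ~ I y ->
  subideal C (sum I (multiples whole y)) /\ subideal m (colon I y).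
Proof.
move=> hm hI [hC hIC _ hmin] hy hyI; have [hmi _] := hm.
have sum_in_C N : is_ideal N -> subideal (sum I (multiples N y)) C.
  by move=> hN; apply: sum_min => // _ [a [_ ->]]; exact: idealMl.
have sum_over N : is_ideal N -> subideal I (sum I (multiples N y)).
  by move=> hN; apply: sum_subl; exact: multiples_ideal.
have sum_is_ideal N : is_ideal N -> is_ideal (sum I (multiples N y)).
  by move=> hN; apply: sum_ideal => //; exact: multiples_ideal.
split.
  apply: hmin; [exact: sum_is_ideal | exact: sum_over | exact: sum_in_C | ].
  by move=> h; apply: hyI; apply: h; apply: sum_subr => //; exists 1; rewrite mul1r.
case: (classic (subideal (sum I (multiples m y)) I)) => hsub.
  by move=> a ha; apply: hsub; apply: sum_subr => //; exists a.
have [c [_ [hc [[a [ha ->]] ey]]]] :=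
  hmin _ (sum_is_ideal _ hmi) (sum_over _ hmi) (sum_in_C _ hmi) hsub y hy.
by exfalso; apply: hyI; apply: (local_cancel hm hI ha); rewrite {1}ey addrK.
Qed.

End Covers.

Section KeyInequality.
Local Open Scope ring_scope.
Variables A B : comNzRingType.
Variable m : A -> Prop.
Hypothesis hm : local_ring m.
Variable f : A -> B.
Hypothesis hf : ring_map f.

(* By induction on l(J/I): split off an ideal C = I + A y covering I; then
   f(C)B <= f(I)B + B f(y) with f(m)B f(y) <= f(I)B. *)
Lemma len_le_extension L : len_le (ext_ideal f m) whole L ->
  forall n (I J : A -> Prop), is_ideal I -> is_ideal J -> subideal I J ->
    len_le I J n -> len_le (ext_ideal f I) (ext_ideal f J) (n * L).
Proof.
move=> hL; elim=> [|n IH] I J hI hJ hIJ hl;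
  (case: (classic (subideal J I)) => hJI;
    first by move=> k C hC; have := len_le_trivial (@ext_ideal_mono _ _ f _ _ hJI) hC; lia).
  by have := hl _ _ (chain_in_pair hI hJ hIJ hJI).
have [C [hcov hCJ]] := exists_cover hI hJ hIJ hJI hl.
have [hC hIC hCI _] := hcov; have [y [hy hyI]] := not_subideal hCI.
have [hCy hmy] := cover_cyclic hm hI hcov hy hyI.
have hext I := ext_ideal_ideal f I.
have [hD hM _] := hf.
rewrite mulSn; apply: (len_le_add (hext C) (hext J)).
- exact: ext_ideal_mono.
- exact: ext_ideal_mono.
- apply: (len_le_cyclic (N := ext_ideal f m) (x := f y)) => //.
  + apply: ext_ideal_min; first exact: colon_ideal.
    by move=> a ha; rewrite /colon -hM; apply: ext_ideal_gen; exact: hmy.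
  + apply: ext_ideal_min.
      by apply: sum_ideal => //; exact: multiples_ideal.
    move=> z /hCy [c [_ [hc [[a [_ ->]] ->]]]]; rewrite hD hM.
    by apply: idealD; [exact: sum_ideal (hext I) (multiples_ideal _ whole_ideal)
      | apply: sum_subl; [exact: multiples_ideal | exact: ext_ideal_gen]
      | apply: sum_subr => //; exists (f a)].
- exact: IH (len_le_quotient hI hIC hCI hCJ hl).
Qed.

End KeyInequality.

Section Radical.
Local Open Scope ring_scope.
Variable A : comNzRingType.
Implicit Types (m q : A -> Prop).

Lemma radical_ideal q : is_ideal q -> is_ideal (radical q).
Proof.
move=> hq; split; first by exists 1%nat; rewrite expr1; apply: ideal0.
split=> [x y [a ha] [b hb]|r x [k hk]]; last by exists k; rewrite exprMn; apply: idealMl.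
exists (a + b)%nat; rewrite exprDn.
apply: (big_ind q (ideal0 hq) (fun u v => idealD hq)) => i _.
rewrite -mulr_natr; apply: idealMr => //.
case: (leqP b i) => hbi.
  have -> : y ^+ i = y ^+ (i - b) * y ^+ b by rewrite -exprD subnK.
  by rewrite mulrA; apply: idealMl.
have -> : x ^+ (a + b - i) = x ^+ (a + b - i - a) * x ^+ a.
  by rewrite -exprD subnK //; lia.
by apply: (idealMr _ hq); apply: (idealMl _ hq).
Qed.

(* In a local ring (A, m), a proper ideal q with radical m is m-primary: an
   element outside m is a unit and so cannot be a zero divisor modulo q. *)
Lemma primary_of_radical m q : local_ring m -> is_ideal q -> subideal q m ->
  (forall x, m x -> radical q x) -> primary_to m q.
Proof.
move=> [hm [hm1 hunit]] hq hqm hrad.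
have hrad_m x : radical q x -> m x.
  move=> [k hk]; apply: NNPP => hx; have [v hv] := hunit _ hx.
  by apply: hm1; rewrite -(expr1n _ k) -hv exprMn; apply: (idealMr _ hm); apply: hqm.
split; last by move=> x; split; [exact: hrad_m | exact: hrad].
split=> //; split; first by move=> h; apply: hm1; apply: hqm.
move=> x y hxy hx; case: (classic (m y)) => hy; first exact: hrad.
have [v hv] := hunit _ hy; exfalso; apply: hx.
by rewrite -(mulr1 x) -hv mulrA; apply: (idealMr _ hq).
Qed.

End Radical.

Section Composition.
Local Open Scope ring_scope.
Variables A B C : comNzRingType.
Variables (mA : A -> Prop) (mB : B -> Prop) (mC : C -> Prop).
Variables (f : A -> B) (g : B -> C).
Hypothesis hg : ring_map g.

Lemma radical_comp :
  (forall x, mB x -> radical (ext_ideal f mA) x) ->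
  (forall x, mC x -> radical (ext_ideal g mB) x) ->
  forall x, mC x -> radical (ext_ideal (g \o f) mA) x.
Proof.
move=> hradB hradC x hx.
have hR := radical_ideal (ext_ideal_ideal (g \o f) mA).
have hsub : subideal (ext_ideal g mB) (radical (ext_ideal (g \o f) mA)).
  apply: ext_ideal_min => // y hy; have [k hk] := hradB y hy.
  exists k; rewrite -ring_mapX //; apply: ext_ideal_comp => //.
  exact: ext_ideal_gen.
have [k hk] := hradC x hx; have [j hj] := hsub _ hk.
by exists (k * j)%nat; rewrite exprM.
Qed.

Lemma local_hom_comp : local_hom mA mB f -> local_hom mB mC g -> local_hom mA mC (g \o f).
Proof. by move=> hlf hlg x hx; apply: hlg; apply: hlf. Qed.

Lemma finite_length_comp : local_ring mC ->
  finite_length_hom mA mB f -> finite_length_hom mB mC g ->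
  finite_length_hom mA mC (g \o f).
Proof.
move=> hmC [hlf [_ hradB]] [hlg [_ hradC]]; have hloc := local_hom_comp hlf hlg.
split=> //; apply: primary_of_radical => //; first exact: ext_ideal_ideal.
  by apply: ext_ideal_min => //; case: hmC.
by apply: radical_comp => x hx; [apply: (hradB x).2 | apply: (hradC x).2].
Qed.

Lemma len_le_comp a b : local_ring mB ->
  len_le (ext_ideal f mA) whole a -> len_le (ext_ideal g mB) whole b ->
  len_le (ext_ideal (g \o f) mA) whole (a * b).
Proof.
move=> hmB ha hb.
have := len_le_extension hmB hg hb (ext_ideal_ideal f mA) whole_ideal (fun x _ => Logic.I) ha.
apply: len_le_mono; first exact: ext_ideal_comp.
exact: ext_ideal_whole.
Qed.

End Composition.

Section Iterates.
Local Open Scope ring_scope.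
Variable A : comNzRingType.
Variable m : A -> Prop.
Hypothesis hm : local_ring m.
Variable phi : A -> A.
Hypothesis hphi : ring_map phi.

Lemma finite_length_iter : finite_length_hom m m phi ->
  forall n, finite_length_hom m m (iter n phi).
Proof.
move=> hfl; elim=> [|n IH]; last exact: finite_length_comp hm IH hfl.
have [hmi _] := hm; split=> //; apply: primary_of_radical => //.
- exact: ext_ideal_ideal.
- exact: ext_ideal_min.
- by move=> x hx; exists 1%nat; rewrite expr1; exact: (ext_ideal_gen (f := iter 0 phi)).
Qed.

Lemma len_le_iter a b La Lb :
  len_le (ext_ideal (iter a phi) m) whole La ->
  len_le (ext_ideal (iter b phi) m) whole Lb ->
  len_le (ext_ideal (iter (a + b) phi) m) whole (La * Lb).
Proof.
move=> ha hb; rewrite mulnC.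
have -> : iter (a + b) phi = iter a phi \o iter b phi.
  by apply: functional_extensionality => x; rewrite /= iterD.
exact: (@len_le_comp _ _ _ m m (iter b phi) (iter a phi) (ring_map_iter a hphi)
  Lb La hm hb ha).
Qed.

End Iterates.

Section QuotientLength.
Local Open Scope ring_scope.
Variable A : comNzRingType.
Implicit Type q : A -> Prop.

Lemma quot_length_exists q L : is_ideal q -> len_le q whole L -> exists l, quot_length q l.
Proof.
move=> hq hL.
have [l [hl hmax]] := bounded_max (P := fun k => exists C, quot_chain q k C)
  (ex_intro _ 0%nat (ex_intro _ _ (chain_in_const hq (fun x h => h) (fun x _ => Logic.I)).1))
  (fun k '(ex_intro C hC) => hL k C (chain_in_whole hC)).
by exists l; split=> // k C hC; apply: hmax; exists C.
Qed.

Lemma quot_length_le q l : quot_length q l -> len_le q whole l.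
Proof. by move=> [_ hmax] k C [hC _]; exact: hmax hC. Qed.

Lemma quot_length_pos q l : quot_length q l -> is_ideal q -> ~ q 1 -> (0 < l)%nat.
Proof.
move=> [_ hmax] hq hq1; apply: (hmax _ _ (chain_in_pair hq whole_ideal _ _).1) => //.
by move=> h; apply: hq1; apply: h.
Qed.

End QuotientLength.

Theorem mainTheorem1 (A : comNzRingType) (m : A -> Prop)
  (hA : noetherian_local m)
  (phi : {rmorphism A -> A})
  (hphi : finite_length_hom m m phi) :
  (forall n : nat, (0 < n)%N ->
     finite_length_hom m m (iter n phi) ) /\
  exists lam : nat -> nat,
    (forall n : nat, (0 < n)%N ->
       quot_length (ext_ideal (iter n phi) m) (lam n)) /\
    exists l : R,
      Un_cv (fun k : nat => Rdiv (ln (INR (lam k.+1))) (INR k.+1)) l /\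
      is_inf (fun x : R => exists n : nat, (0 < n)%N /\
                 x = Rdiv (ln (INR (lam n))) (INR n)) l.
Proof.
have [hnoeth hm] := hA; have hring := rmorph_ring_map phi.
have hiter := finite_length_iter hm hring hphi.
split=> [n _|]; first exact: hiter.
(* lambda(phi^n) exists since m is the radical of phi^n(m)A *)
have hlen n : exists l, quot_length (ext_ideal (iter n phi) m) l.
  have [_ [_ hrad]] := hiter n; have hq := ext_ideal_ideal (iter n phi) m.
  have [L hL] := len_le_of_radical hnoeth hm hq (fun x hx => (hrad x).2 hx).
  exact: quot_length_exists hq hL.
have [lam hlam] := choice _ hlen.
exists lam; split=> [n _|]; first exact: hlam.
apply: fekete_log => [n _|a b _ _].
  have [_ [[hq [hq1 _]] _]] := hiter n; exact: quot_length_pos (hlam n) hq hq1.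
have := len_le_iter hm hring (quot_length_le (hlam a)) (quot_length_le (hlam b)).
by have [[C hC] _] := hlam (a + b)%nat => /(_ _ _ (chain_in_whole hC)).
Qed.
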